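(* Let $\boldsymbol{\mathcal{G}}=(\mathcal{V},\boldsymbol{\mathcal{E}},\mu(\cdot))$ be a stochastic digraph with vertex set $\mathbb{Z}_n$, edge sets $\mathcal{E}_1,\dots,\mathcal{E}_h$, and out-neighborhood map $H(x,w)=\{y:(x,y)\in\mathcal{E}_w\}$, such that there is no pair $(i,w)\in\mathbb{Z}_n\times\mathbb{Z}_h$ with $\mu(\{w\})>0$ and $H(i,w)=\emptyset$. Let $\mathcal{Q}\subset\mathbb{Z}_n$ and let $\check{\boldsymbol{\mathcal{G}}}$ be the augmented stochastic digraph on $\mathbb{Z}_{n+2}$ (with the same $\mu$) obtained by replacing, in each $\mathcal{E}_s$, every edge $(i,j)$ with $j\in\mathcal{Q}$ by the edge $(i,n+1)$, and adding the edges $(n+1,n+2)$ and $(n+2,n+2)$ to each $\mathcal{E}_s$. Let $\check H$ be its out-neighborhood map and consider the Markov decision process on states $\mathbb{Z}_{n+2}$ with action space $\mathcal{A}(i)$ at state $i$ equal to the set of tuples $a=(\xi_{1,a},\dots,\xi_{h,a})$ with $\xi_{w,a}\in\check H(i,w)$ for each $w$, transition probabilities $$\check p(j\mid i,a)=\sum_{w\in\{s\in\mathbb{Z}_h:\,\xi_{s,a}=j\}}\mu(\{w\}),$$ and reward $r(i,a,j)=\mathbb{I}_{\{n+1\}}(j)$. Let $v_\star$ be the optimal state-value function of this MDP, i.e., $v_\star(0,x)=0$ and $v_\star(k,x)=\max_{a\in\mathcal{A}(x)}\sum_{j}\check p(j\mid x,a)\big(r(x,a,j)+v_\star(k-1,j)\big)$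 for $k\geqslant1$. Then for all $k\in\mathbb{Z}_{\geqslant0}$ and all $x\in\mathbb{Z}_n$, $$\mathfrak{R}_{\mathcal{Q}}(k,x)=v_\star(k,x),$$ where $\mathfrak{R}_{\mathcal{Q}}(k,x):=\sup_{\boldsymbol{x}\in\mathcal{S}(x)}\mathbb{P}\big(\exists\,t\in\{1,\dots,k\}:\boldsymbol{x}_t\in\mathcal{Q}\big)$ is the weak reachability probability.
   Context: A stochastic digraph is a triple $(\mathbb{Z}_n,\{\mathcal{E}_s\}_{s=1}^h,\mu)$ with $\mathcal{E}_s\subset\mathbb{Z}_n\times\mathbb{Z}_n$ and $\mu$ the common distribution of an i.i.d. sequence $\boldsymbol{w}_k:\Omega\to\mathbb{Z}_h$, $k\in\mathbb{Z}_{\geqslant0}$, on a probability space $(\Omega,\mathcal{F},\mathbb{P})$. A stochastic directed path from $x$ is a map $\omega\mapsto\{\boldsymbol{x}_k(\omega)\}_{k=0}^{\boldsymbol{K}(\omega)}$ with $\boldsymbol{x}_0=x$, $\boldsymbol{x}_{k+1}(\omega)\in H(\boldsymbol{x}_k(\omega),\boldsymbol{w}_k(\omega))$ for all $\omega$ and $k<\boldsymbol{K}(\omega)$, and with $\boldsymbol{x}_{k+1}$ measurable with respect to $\sigma(\boldsymbol{w}_0,\dots,\boldsymbol{w}_k)$ for each $k$. It is maximal if it cannot be extended; $\mathcal{S}(x)$ is the set of maximal stochastic directed paths from $x$. $\mathbb{I}_{A}$ denotes the indicator function of the set $A$. *)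

From HB Require Import structures.
From mathcomp Require Import all_boot all_order all_algebra.
From mathcomp Require Import all_classical all_reals all_analysis.

Set Implicit Arguments.
Unset Strict Implicit.
Unset Printing Implicit Defensive.

Import Order.TTheory GRing.Theory Num.Theory.
Local Open Scope classical_set_scope.
Local Open Scope ring_scope.

(* Vertices Z_n are represented by 'I_n (0-indexed); the noise alphabet Z_h
   by 'I_h.  A stochastic digraph's edge sets: E : 'I_h -> {set 'I_n * 'I_n}. *)

Definition Hout (n h : nat) (E : 'I_h -> {set 'I_n * 'I_n}) (x : 'I_n) (w : 'I_h)
  : {set 'I_n} := [set y | (x, y) \in E w].

(* original vertex i is embedded as i; the paper's vertex "n+1" is the
   ordinal n and the paper's vertex "n+2" is the ordinal n+1. *)
Definition emb (n : nat) (i : 'I_n) : 'I_(n + 2) := lshift 2 i.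
Definition vQ (n : nat) : 'I_(n + 2) := rshift n (@Ordinal 2 0 isT).
Definition vS (n : nat) : 'I_(n + 2) := rshift n (@Ordinal 2 1 isT).

Definition Echeck (n h : nat) (E : 'I_h -> {set 'I_n * 'I_n}) (Q : {set 'I_n})
  (s : 'I_h) : {set 'I_(n + 2) * 'I_(n + 2)} :=
  [set (emb e.1, if e.2 \in Q then vQ n else emb e.2) | e in E s]
  :|: [set (vQ n, vS n); (vS n, vS n)].

Definition Hcheck (n h : nat) (E : 'I_h -> {set 'I_n * 'I_n}) (Q : {set 'I_n})
  (i : 'I_(n + 2)) (w : 'I_h) : {set 'I_(n + 2)} :=
  [set j | (i, j) \in Echeck E Q w].

Definition admissible (n h : nat) (E : 'I_h -> {set 'I_n * 'I_n}) (Q : {set 'I_n})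
  (i : 'I_(n + 2)) (a : {ffun 'I_h -> 'I_(n + 2)}) : bool :=
  [forall w, (Hcheck E Q i w != finset.set0) ==> (a w \in Hcheck E Q i w)].

Definition ptrans (R : realType) (n h : nat) (mu : 'I_h -> R)
  (i : 'I_(n + 2)) (a : {ffun 'I_h -> 'I_(n + 2)}) (j : 'I_(n + 2)) : R :=
  \sum_(w < h | a w == j) mu w.

Definition reward (R : realType) (n : nat) (j : 'I_(n + 2)) : R :=
  if j == vQ n then 1 else 0.

(* optimal state-value function (finite horizon k); the max is over the
   (finite, nonempty) admissible action set; all values are >= 0 when mu is a
   probability mass function, so the neutral element 0 is harmless. *)
Fixpoint vstar (R : realType) (n h : nat) (E : 'I_h -> {set 'I_n * 'I_n})
  (Q : {set 'I_n}) (mu : 'I_h -> R) (k : nat) (x : 'I_(n + 2)) : R :=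
  match k with
  | 0 => 0
  | k'.+1 =>
      \big[Num.max/0]_(a : {ffun 'I_h -> 'I_(n + 2)} | admissible E Q x a)
        \sum_(j < n + 2)
           ptrans mu x a j * (reward R j + vstar E Q mu k' j)
  end.

Section Stoch.
Context (R : realType) (d : measure_display) (Omega : measurableType d).
Context (P : probability Omega R).
Context (n h : nat) (E : 'I_h -> {set 'I_n * 'I_n}).
Context (w : nat -> Omega -> 'I_h).

Definition iid_law (mu : 'I_h -> R) : Prop :=
  (forall (i : nat) (B : set 'I_h), measurable (w i @^-1` B)) /\
  (forall (S : seq nat) (B : nat -> {set 'I_h}), uniq S ->
     P (\bigcap_(i in [set i | i \in S]) (w i @^-1` [set b | b \in B i]))
     = (\prod_(i <- S) \sum_(b in B i) mu b)%:E).

Definition sigma_w (t : nat) : set (set Omega) :=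
  <<s [set A | exists (i : nat) (B : set 'I_h), (i <= t)%N /\ A = w i @^-1` B] >>.

(* A stochastic directed path from x0, {x_k(omega)}_{k=0}^{K(omega)}, is
   encoded as x : nat -> Omega -> option 'I_n with x t omega = Some (x_t omega)
   for t <= K(omega) and None for t > K(omega) (K(omega) may be infinite). *)
Definition stoch_path (x0 : 'I_n) (x : nat -> Omega -> option 'I_n) : Prop :=
  (forall om, x 0%N om = Some x0) /\
  (forall (t : nat) om (y : 'I_n), x t.+1 om = Some y ->
      exists z, x t om = Some z /\ y \in Hout E z (w t om)) /\
  (forall (t : nat) (o : option 'I_n), sigma_w t (x t.+1 @^-1` [set o])).

Definition maximal_path (x0 : 'I_n) (x : nat -> Omega -> option 'I_n) : Prop :=
  stoch_path x0 x /\
  (forall om (t : nat) (y : 'I_n), x t om = Some y -> x t.+1 om = None ->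
      Hout E y (w t om) = finset.set0).

Definition reach_event (Q : {set 'I_n}) (k : nat) (x : nat -> Omega -> option 'I_n)
  : set Omega :=
  [set om | exists t : nat, [/\ (1 <= t)%N, (t <= k)%N &
                exists y, x t om = Some y /\ y \in Q]].

Definition weak_reach (Q : {set 'I_n}) (k : nat) (x0 : 'I_n) : \bar R :=
  ereal_sup [set P (reach_event Q k x) | x in [set x | maximal_path x0 x]].

End Stoch.

(* Since x_{t+1} is sigma(w_0, ..., w_t)-measurable, a stochastic path is a
   function X of the noise word w_0 ... w_{t-1} read so far, and the noise window
   w_0 ... w_{k-1} has the product law mu^k.  The probability of reaching Q within
   k steps is therefore the mu^k-expectation of a predicate on words; peeling off
   the first letter, it is bounded by induction on k by the Bellman recursion
   [reach_value]
     U(k+1, y) = sum_c mu(c) max_{z in H(y, c)} (if z \in Q then 1 else U(k, z)),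
   and the path that always moves to a maximising successor attains it.  In the
   augmented MDP the vertices of Q are merged into n+1, which pays reward 1 and then
   falls into the absorbing vertex n+2, so v* on the original vertices obeys the
   same recursion. *)

From HB Require Import structures.
From mathcomp Require Import all_boot all_order all_algebra.
From mathcomp Require Import all_classical all_reals all_analysis.
From mathcomp Require Import zify.
Import Order.TTheory GRing.Theory Num.Theory.
Local Open Scope classical_set_scope.
Local Open Scope ring_scope.
Set Implicit Arguments.
Unset Strict Implicit.
Unset Printing Implicit Defensive.

Section Words.
Variables (R : realType) (h : nat) (mu : 'I_h -> R).
Hypothesis mu_ge0 : forall c, 0 <= mu c.
Hypothesis mu_sum1 : \sum_(c < h) mu c = 1.

Definition word_prob (u : seq 'I_h) : R := \prod_(c <- u) mu c.

Fixpoint word_expect (k : nat) (f : seq 'I_h -> bool) : R :=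
  if k is k'.+1 then \sum_(c < h) mu c * word_expect k' (fun v => f (c :: v))
  else (f [::])%:R.

Lemma word_prob_rcons u c : word_prob (rcons u c) = word_prob u * mu c.
Proof. by rewrite /word_prob -cats1 big_cat big_seq1. Qed.

Lemma word_prob_cons c u : word_prob (c :: u) = mu c * word_prob u.
Proof. by rewrite /word_prob big_cons. Qed.

Lemma eq_word_expect k (f g : seq 'I_h -> bool) :
  f =1 g -> word_expect k f = word_expect k g.
Proof.
elim: k f g => [|k IH] f g fg /=; first by rewrite fg.
by apply: eq_bigr => c _; rewrite (IH _ (fun v => g (c :: v))).
Qed.

Lemma word_expect1 k : word_expect k (fun _ => true) = 1.
Proof.
elim: k => [|k IH] //=.
by rewrite -mu_sum1; apply: eq_bigr => c _; rewrite IH mulr1.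
Qed.

Lemma le_word_expect k (f g : seq 'I_h -> bool) :
  (forall u, f u -> g u) -> word_expect k f <= word_expect k g.
Proof.
elim: k f g => [|k IH] f g fg /=.
  by case fu: (f [::]) => //=; rewrite (fg _ fu).
by apply: ler_sum => c _; rewrite ler_wpM2l // IH // => u; apply: fg.
Qed.

Lemma word_expect_le1 k f : word_expect k f <= 1.
Proof. by rewrite -(word_expect1 k); apply: le_word_expect. Qed.

End Words.

Section ReachValue.
Variables (R : realType) (n h : nat) (E : 'I_h -> {set 'I_n * 'I_n})
  (Q : {set 'I_n}) (mu : 'I_h -> R).
Hypothesis mu_ge0 : forall c, 0 <= mu c.

Fixpoint reach_value (m : nat) (y : 'I_n) : R :=
  if m is m'.+1 then
    \sum_(c < h) mu c *
      \big[Num.max/0]_(z in Hout E y c) (if z \in Q then 1 else reach_value m' z)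
  else 0.

Definition hit_value (m : nat) (z : 'I_n) : R := if z \in Q then 1 else reach_value m z.

Lemma reach_valueS m y :
  reach_value m.+1 y = \sum_(c < h) mu c * \big[Num.max/0]_(z in Hout E y c) hit_value m z.
Proof. by []. Qed.

Lemma reach_value_ge0 m y : 0 <= reach_value m y.
Proof.
by case: m => [|m] //=; apply: sumr_ge0 => c _; rewrite mulr_ge0 ?bigmax_ge_id.
Qed.

Lemma hit_value_ge0 m z : 0 <= hit_value m z.
Proof. by rewrite /hit_value; case: ifP => _ //; exact: reach_value_ge0. Qed.

Definition best_succ (m : nat) (y : 'I_n) (c : 'I_h) : 'I_n :=
  if [pick z in Hout E y c] is Some z0
  then [arg max_(z > z0 in Hout E y c) hit_value m z]%O else y.

Lemma best_succP m y c : Hout E y c != finset.set0 ->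
  best_succ m y c \in Hout E y c /\
  hit_value m (best_succ m y c) = \big[Num.max/0]_(z in Hout E y c) hit_value m z.
Proof.
move=> /set0Pn [z1 yz1]; rewrite /best_succ.
case: pickP => [z0 yz0|/(_ z1)]; last by rewrite /= yz1.
rewrite (bigmax_eq_arg _ _ _ _ yz0) => [|z _]; last exact: hit_value_ge0.
by case: arg_maxP.
Qed.

End ReachValue.

Section WordPaths.
Variables (R : realType) (n h : nat) (E : 'I_h -> {set 'I_n * 'I_n})
  (Q : {set 'I_n}) (mu : 'I_h -> R).
Hypothesis mu_ge0 : forall c, 0 <= mu c.
Hypothesis mu_sum1 : \sum_(c < h) mu c = 1.
Hypothesis no_dead_end : forall i s, 0 < mu s -> Hout E i s != finset.set0.

Lemma dead_end_mu_eq0 y c : Hout E y c = finset.set0 -> mu c = 0.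
Proof.
move=> yc0; apply/eqP; rewrite eq_le mu_ge0 andbT leNgt.
by apply/negP => /(no_dead_end y); rewrite yc0 eqxx.
Qed.

Definition inQ (o : option 'I_n) : bool := oapp (fun y => y \in Q) false o.

Definition hits (X : seq 'I_h -> option 'I_n) (k : nat) (u : seq 'I_h) : bool :=
  has (fun t => inQ (X (take t u))) (iota 1 k).

Lemma hits_cons X k c v :
  hits X k.+1 (c :: v) = inQ (X [:: c]) || hits (fun v => X (c :: v)) k v.
Proof.
rewrite /hits /= take0 (iotaDl 1 1) has_map.
by congr (_ || _); apply: eq_has => t /=; rewrite add1n.
Qed.

(* A stochastic path read as a function of the noise word seen so far; it is
   constrained only on words of positive probability. *)
Definition word_path_ae (x0 : 'I_n) (X : seq 'I_h -> option 'I_n) : Prop :=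
  X [::] = Some x0 /\
  forall u c z, 0 < word_prob mu (rcons u c) -> X u = Some z ->
    exists2 y, X (rcons u c) = Some y & y \in Hout E z c.

Lemma word_path_ae_first x0 X c : 0 < mu c -> word_path_ae x0 X ->
  exists2 y, X [:: c] = Some y & y \in Hout E x0 c.
Proof. by move=> c_gt0 [X0 Xstep]; apply: Xstep X0; rewrite /word_prob big_seq1. Qed.

Lemma word_path_ae_cons x0 X c y : 0 < mu c -> word_path_ae x0 X ->
  X [:: c] = Some y -> word_path_ae y (fun v => X (c :: v)).
Proof.
move=> c_gt0 [_ Xstep] Xc; split => // u c' z pos; apply: (Xstep (c :: u)).
by rewrite /= word_prob_cons mulr_gt0.
Qed.

Lemma word_expect_hits_le k x0 X : word_path_ae x0 X ->
  word_expect mu k (hits X k) <= reach_value E Q mu k x0.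
Proof.
elim: k x0 X => [|k IH] x0 X XP //=.
apply: ler_sum => c _.
have [->|c_neq0] := eqVneq (mu c) 0; first by rewrite !mul0r.
have c_gt0 : 0 < mu c by rewrite lt_def c_neq0 mu_ge0.
rewrite ler_wpM2l //.
have [y Xc x0y] := word_path_ae_first c_gt0 XP.
apply: bigmax_sup x0y _; rewrite /hit_value.
case: ifP => yQ; under eq_word_expect do rewrite hits_cons Xc /= yQ /=.
  exact: word_expect_le1.
exact/IH/(word_path_ae_cons c_gt0 XP Xc).
Qed.

Definition greedy_step (m : nat) (z : 'I_n) (c : 'I_h) : option 'I_n :=
  if Hout E z c == finset.set0 then None else Some (best_succ E Q mu m z c).

(* [m] is the remaining horizon; once it is exhausted the path must still be
   extended to stay maximal, whence the saturating [m.-1]. *)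
Fixpoint greedy (m : nat) (z : 'I_n) (u : seq 'I_h) : option 'I_n :=
  if u is c :: v then obind (fun y => greedy m.-1 y v) (greedy_step m.-1 z c)
  else Some z.

Lemma greedy_rcons m z u c :
  greedy m z (rcons u c) = obind (fun y => greedy_step (m - size u).-1 y c) (greedy m z u).
Proof.
elim: u m z => [|a u IH] m z /=; first by rewrite subn0; case: greedy_step.
by case: greedy_step => //= y; rewrite IH subnS -predn_sub.
Qed.

Lemma greedy_value k z :
  word_expect mu k (hits (greedy k z) k) = reach_value E Q mu k z.
Proof.
elim: k z => [|k IH] z //=; apply: eq_bigr => c _.
have [/dead_end_mu_eq0 ->|zc] := eqVneq (Hout E z c) finset.set0; first by rewrite !mul0r.
have [_ best_max] := best_succP Q mu_ge0 k zc.
have step : greedy_step k z c = Some (best_succ E Q mu k z c).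
  by rewrite /greedy_step (negbTE zc).
rewrite -best_max /hit_value; congr (_ * _).
under eq_word_expect do rewrite hits_cons /= step /=.
case: ifP => _ /=; [exact: word_expect1 | exact: IH].
Qed.

Definition maximal_word_path (x0 : 'I_n) (X : seq 'I_h -> option 'I_n) : Prop :=
  X [::] = Some x0 /\
  forall u c, if X u is Some y then
      if X (rcons u c) is Some y' then (y' \in Hout E y c : Prop)
      else Hout E y c = finset.set0
    else X (rcons u c) = None.

Lemma greedy_maximal k z : maximal_word_path z (greedy k z).
Proof.
split=> // u c; rewrite greedy_rcons; case: greedy => //= y.
rewrite /greedy_step; case: ifP => [/eqP //|/negbT yc].
by have [] := best_succP Q mu_ge0 (k - size u).-1 yc.
Qed.

End WordPaths.

Section Augmented.
Variables (n h : nat) (E : 'I_h -> {set 'I_n * 'I_n}) (Q : {set 'I_n}).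

Definition embQ (z : 'I_n) : 'I_(n + 2) := if z \in Q then vQ n else emb z.

Lemma emb_neq_vQ y : (emb y == vQ n) = false.
Proof. by apply/negbTE/eqP => /(congr1 val) /=; have := ltn_ord y; lia. Qed.

Lemma emb_neq_vS y : (emb y == vS n) = false.
Proof. by apply/negbTE/eqP => /(congr1 val) /=; have := ltn_ord y; lia. Qed.

Lemma vS_neq_vQ : (vS n == vQ n) = false.
Proof. by apply/negbTE/eqP => /(congr1 val) /=; lia. Qed.

Lemma Hcheck_emb y c : Hcheck E Q (emb y) c = embQ @: Hout E y c.
Proof.
apply/setP => j; rewrite !inE !xpair_eqE emb_neq_vQ emb_neq_vS orbF.
apply/imsetP/imsetP => [[[a b] ab /= [/val_inj -> ->]]|[z]].
  by exists b; rewrite // inE.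
by rewrite inE => yz ->; exists (y, z).
Qed.

Lemma Hcheck_sink (i : 'I_(n + 2)) c : (n <= i)%N -> Hcheck E Q i c = [set vS n]%SET.
Proof.
move=> ni; have iQS : (i == vQ n) || (i == vS n).
  by rewrite -!val_eqE /=; have := ltn_ord i; lia.
have notin_emb j : (i, j) \notin [set (emb e.1, embQ e.2) | e in E c]%SET.
  by apply/imsetP => -[[a b] _ [ia _]]; move: ni; rewrite ia /= leqNgt ltn_ord.
by apply/setP => j; rewrite !inE (negbTE (notin_emb j)) !xpair_eqE -andb_orl iQS.
Qed.

End Augmented.

Section OptimalValue.
Variables (R : realType) (n h : nat) (E : 'I_h -> {set 'I_n * 'I_n})
  (Q : {set 'I_n}) (mu : 'I_h -> R).
Hypothesis mu_ge0 : forall c, 0 <= mu c.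
Hypothesis no_dead_end : forall i s, 0 < mu s -> Hout E i s != finset.set0.

Lemma sum_ptrans x (a : {ffun 'I_h -> 'I_(n + 2)}) (F : 'I_(n + 2) -> R) :
  \sum_(j < n + 2) ptrans mu x a j * F j = \sum_(c < h) mu c * F (a c).
Proof.
under eq_bigr do rewrite /ptrans big_distrl big_mkcond.
rewrite exchange_big /=; apply: eq_bigr => c _.
rewrite (bigD1 (a c)) //= eqxx big1 ?addr0 // => j /negbTE.
by rewrite eq_sym => ->.
Qed.

Lemma admissible_succ x a c : admissible E Q x a ->
  Hcheck E Q x c != finset.set0 -> a c \in Hcheck E Q x c.
Proof. by move=> /forallP /(_ c) /implyP. Qed.

Lemma vstar_to_vS m i : (forall c, Hcheck E Q i c = [set vS n]%SET) ->
  vstar E Q mu m (vS n) = 0 -> vstar E Q mu m.+1 i = 0.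
Proof.
move=> iS vS0 /=; apply: bigmax_eq_id => a ia; rewrite sum_ptrans.
rewrite big1 // => c _.
have /admissible_succ : Hcheck E Q i c != finset.set0.
  by rewrite iS; apply/set0Pn; exists (vS n); rewrite inE.
move=> /(_ _ ia); rewrite iS inE => /eqP ->.
by rewrite vS0 /reward vS_neq_vQ addr0 mulr0.
Qed.

Lemma vstar_vS m : vstar E Q mu m (vS n) = 0.
Proof.
by elim: m => [|m IH] //; apply: vstar_to_vS => // c; rewrite Hcheck_sink ?leq_addr.
Qed.

Lemma vstar_vQ m : vstar E Q mu m (vQ n) = 0.
Proof.
by case: m => [|m] //; apply: vstar_to_vS (vstar_vS m) => c; rewrite Hcheck_sink ?leq_addr.
Qed.

Lemma vstar_emb m y : vstar E Q mu m (emb y) = reach_value E Q mu m y.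
Proof.
elim: m y => [|m IH] y //.
have embQ_value z : reward R (embQ Q z) + vstar E Q mu m (embQ Q z) = hit_value E Q mu m z.
  rewrite /embQ /hit_value /reward; case: (z \in Q); first by rewrite eqxx vstar_vQ addr0.
  by rewrite emb_neq_vQ IH add0r.
apply/le_anti/andP; split.
  apply: bigmax_le => [|a ya]; first exact: reach_value_ge0.
  rewrite sum_ptrans reach_valueS; apply: ler_sum => c _.
  have [/(dead_end_mu_eq0 mu_ge0 no_dead_end) ->|yc] := eqVneq (Hout E y c) finset.set0.
    by rewrite !mul0r.
  have := admissible_succ (c := c) ya; rewrite Hcheck_emb imset_eq0.
  move=> /(_ yc) /imsetP [z yz ->].
  by rewrite ler_wpM2l // embQ_value; apply: le_bigmax_cond.
pose a := [ffun c => embQ Q (best_succ E Q mu m y c)].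
have ya : admissible E Q (emb y) a.
  apply/forallP => c; apply/implyP; rewrite Hcheck_emb imset_eq0 => yc.
  by rewrite ffunE; apply: imset_f; have [] := best_succP Q mu_ge0 m yc.
suff a_value : \sum_(c < h) mu c * (reward R (a c) + vstar E Q mu m (a c)) =
                reach_value E Q mu m.+1 y.
  by apply: bigmax_sup ya _; rewrite sum_ptrans a_value.
apply: eq_bigr => c _; rewrite ffunE embQ_value.
have [/(dead_end_mu_eq0 mu_ge0 no_dead_end) ->|yc] := eqVneq (Hout E y c) finset.set0.
  by rewrite !mul0r.
by have [_ ->] := best_succP Q mu_ge0 m yc.
Qed.

End OptimalValue.

Section Window.
Variables (T : Type) (h : nat) (w : nat -> T -> 'I_h).

Definition window (om : T) (m k : nat) : seq 'I_h := [seq w i om | i <- iota m k].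

Lemma size_window om m k : size (window om m k) = k.
Proof. by rewrite size_map size_iota. Qed.

Lemma nth_window om m k i c0 : (i < k)%N -> nth c0 (window om m k) i = w (m + i) om.
Proof. by move=> ik; rewrite (nth_map 0%N) ?size_iota // nth_iota. Qed.

Lemma window_rcons om m k : window om m k.+1 = rcons (window om m k) (w (m + k) om).
Proof. by rewrite /window -addn1 iotaD map_cat cats1. Qed.

Lemma window_cons om m k : window om m k.+1 = w m om :: window om m.+1 k.
Proof. by []. Qed.

Lemma window_cat om m a b : window om m (a + b) = window om m a ++ window om (m + a) b.
Proof. by rewrite /window iotaD map_cat. Qed.

Lemma take_window om t k : (t <= k)%N -> take t (window om 0 k) = window om 0 t.
Proof. by move=> tk; rewrite -map_take take_iota (minn_idPl tk). Qed.

End Window.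

Lemma measurable_window d (T : measurableType d) h (w : nat -> T -> 'I_h) N :
  (forall i c, (i < N)%N -> measurable (w i @^-1` [set c])) ->
  forall g : seq 'I_h -> Prop, measurable [set om | g (window w om 0 N)].
Proof.
elim: N => [|N IH] wm g.
  have [g0|g0] := pselect (g [::]).
    by rewrite (_ : [set om | _] = setT) //; apply/seteqP; split.
  by rewrite (_ : [set om | _] = set0) //; apply/seteqP; split.
have -> : [set om | g (window w om 0 N.+1)] =
    \bigcup_(c : 'I_h) (w N @^-1` [set c] `&` [set om | g (rcons (window w om 0 N) c)]).
  apply/seteqP; split => om /=; rewrite window_rcons.
    by move=> gw; exists (w N om).
  by case=> c _ [/= <-].
apply: countable_bigcupT_measurable; first exact: countableP.
move=> c; apply: measurableI; first exact: wm.
exact: (IH (fun i c' iN => wm i c' (ltnW iN)) (fun u => g (rcons u c))).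
Qed.

Section Noise.
Variables (R : realType) (d : measure_display) (Omega : measurableType d)
  (P : probability Omega R) (h : nat) (mu : 'I_h -> R) (w : nat -> Omega -> 'I_h).

Lemma sigma_w_window t A : sigma_w w t A ->
  forall om om', window w om 0 t.+1 = window w om' 0 t.+1 -> A om -> A om'.
Proof.
move=> tA; pose C := [set B : set Omega | forall om om',
  window w om 0 t.+1 = window w om' 0 t.+1 -> B om -> B om'].
apply: (smallest_sub (X := C) _ _ tA) => [|B [i [B' [it ->]]] om om' ww /=].
  split => [om om' //|B CB om om' ww [_ nB]|F CF om om' ww [i _ Fi]].
    by split => // Bom'; apply/nB/(CB om' om).
  by exists i => //; apply: (CF i om).
by have := congr1 (fun s => nth (w 0 om) s i) ww; rewrite !nth_window ?ltnS // => ->.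
Qed.

Lemma sigma_w_measurable_window t (g : seq 'I_h -> Prop) :
  sigma_w w t [set om | g (window w om 0 t.+1)].
Proof.
apply: (@measurable_window _ (g_sigma_algebraType _)) => i c it.
by apply: sub_sigma_algebra; exists i, [set c].
Qed.

Hypothesis iid : iid_law P w mu.

Lemma measurable_window_set k (g : seq 'I_h -> Prop) :
  measurable [set om | g (window w om 0 k)].
Proof. by apply: measurable_window => i c _; case: iid => wm _; apply: wm. Qed.

Lemma probability_inhabited : exists om : Omega, True.
Proof.
apply: contrapT => noom; have T0 : [set: Omega] = set0.
  by apply/seteqP; split => // om _; apply: noom; exists om.
by have := probability_setT P; rewrite T0 measure0 => -[] /esym/eqP; rewrite oner_eq0.
Qed.

Lemma prob_window_eq p :
  P [set om | window w om 0 (size p) = p] = (word_prob mu p)%:E.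
Proof.
have [om0 _] := probability_inhabited; pose c0 := w 0%N om0.
case: iid => _ /(_ (iota 0 (size p)) (fun i => [set nth c0 p i]%SET) (iota_uniq 0 _)).
have -> : \bigcap_(i in [set i | i \in iota 0 (size p)])
    (w i @^-1` [set b | b \in [set nth c0 p i]%SET]) =
    [set om | window w om 0 (size p) = p].
  apply/seteqP; split => om /=.
    move=> wp; apply: (@eq_from_nth _ c0) => [|i]; rewrite size_window // => ip.
    rewrite nth_window // add0n; apply/eqP; rewrite -finset.in_set1.
    by apply: (wp i); rewrite /= mem_iota.
  move=> wp i /=; rewrite mem_iota add0n finset.in_set1 => ip.
  by rewrite -wp nth_window.
move=> ->; congr (_%:E); under eq_bigr do rewrite big_set1.
by rewrite /word_prob -{3}(mkseq_nth c0 p) /mkseq big_map.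
Qed.

Lemma prob_window_prefix k : forall p (f : seq 'I_h -> bool),
  P [set om | window w om 0 (size p) = p /\ f (window w om (size p) k)] =
  (word_prob mu p * word_expect mu k f)%:E.
Proof.
elim: k => [|k IH] p f /=.
  case: (f [::]); last first.
    rewrite mulr0 (_ : [set om | _] = set0) ?measure0 //.
    by apply/seteqP; split => om // [].
  rewrite mulr1 -prob_window_eq; congr (P _).
  by apply/seteqP; split => om /= => [[]|->].
pose F c := [set om | window w om 0 (size (rcons p c)) = rcons p c /\
  f (c :: window w om (size (rcons p c)) k)].
have -> : [set om | window w om 0 (size p) = p /\ f (window w om (size p) k.+1)] =
    \big[setU/set0]_(c < h) F c.
  rewrite -bigcup_seq; apply/seteqP; split => om /=.
    rewrite window_cons => -[wp fw]; exists (w (size p) om); first exact: mem_index_enum.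
    by rewrite /F /= size_rcons window_rcons wp.
  by case=> c _; rewrite /F /= size_rcons window_rcons => -[/rcons_inj [-> <-]].
have mF c : measurable (F c).
  pose g u := take (size (rcons p c)) u = rcons p c /\ f (c :: drop (size (rcons p c)) u).
  rewrite (_ : F c = [set om | g (window w om 0 (size (rcons p c) + k))]).
    exact: measurable_window_set.
  by apply/seteqP; split => om;
    rewrite /g /= window_cat take_size_cat ?drop_size_cat ?size_window.
rewrite measure_semi_additive_ord //; last 2 first.
- move=> c c' _ _ [om [[+ _] [+ _]]]; rewrite !size_rcons => ->.
  by move=> /rcons_inj [].
- exact: bigsetU_measurable.
rewrite (eq_bigr (fun c =>
  (word_prob mu (rcons p c) * word_expect mu k (fun v => f (c :: v)))%:E)); last first.
  by move=> c _; apply: IH.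
rewrite sumEFin big_distrr; congr (_%:E); apply: eq_bigr => c _.
by rewrite word_prob_rcons /= mulrA.
Qed.

Lemma prob_window k (f : seq 'I_h -> bool) :
  P [set om | f (window w om 0 k)] = (word_expect mu k f)%:E.
Proof.
have := prob_window_prefix k [::] f; rewrite /word_prob big_nil mul1r => <-.
congr (P _).
by apply/seteqP; split => om /= => [|[]].
Qed.

Lemma iid_mu_ge0 c : 0 <= mu c.
Proof.
rewrite -lee_fin; have := prob_window_eq [:: c]; rewrite /word_prob big_seq1 => <-.
exact: measure_ge0.
Qed.

Lemma iid_mu_sum1 : \sum_(c < h) mu c = 1.
Proof.
have := prob_window 1 xpredT.
rewrite (_ : [set om | _] = setT); last by apply/seteqP; split.
rewrite probability_setT.
by case=> /esym /=; under eq_bigr do rewrite mulr1.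
Qed.

Lemma exists_window p : 0 < word_prob mu p -> exists om, window w om 0 (size p) = p.
Proof.
move=> p_gt0; apply: contrapT => nop.
have := prob_window_eq p; rewrite (_ : [set om | _] = set0) ?measure0.
  by case=> /eqP; rewrite eq_sym gt_eqF.
by apply/seteqP; split => // om wp; apply: nop; exists om.
Qed.

End Noise.

Section WindowPaths.
Variables (R : realType) (d : measure_display) (Omega : measurableType d)
  (P : probability Omega R) (n h : nat) (E : 'I_h -> {set 'I_n * 'I_n})
  (mu : 'I_h -> R) (w : nat -> Omega -> 'I_h).

Lemma stoch_path_window x0 (x : nat -> Omega -> option 'I_n) t om om' :
  stoch_path E w x0 x -> window w om 0 t = window w om' 0 t -> x t om = x t om'.
Proof.
case=> [x0P [_ xm]]; case: t => [|t] ww; first by rewrite !x0P.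
by have /= -> := sigma_w_window (xm t (x t.+1 om)) ww erefl.
Qed.

Definition path_word (x : nat -> Omega -> option 'I_n) (u : seq 'I_h) : option 'I_n :=
  xget None [set o | exists2 om, window w om 0 (size u) = u & x (size u) om = o].

Lemma path_wordE x0 x t om : stoch_path E w x0 x ->
  x t om = path_word x (window w om 0 t).
Proof.
move=> xp; rewrite /path_word size_window.
have : [set o | exists2 om', window w om' 0 t = window w om 0 t & x t om' = o] (x t om).
  by exists om.
move=> /(xgetI None) [om' ww <-].
exact: stoch_path_window xp (esym ww).
Qed.

Lemma reach_event_window (Q : {set 'I_n}) k (x : nat -> Omega -> option 'I_n)
  (X : seq 'I_h -> option 'I_n) : (forall t om, x t om = X (window w om 0 t)) ->
  reach_event Q k x = [set om | hits Q X k (window w om 0 k)].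
Proof.
move=> xX; apply/seteqP; split => om /=.
  move=> [t [t1 tk [y [xt yQ]]]]; apply/hasP; exists t.
    by rewrite mem_iota t1 add1n ltnS.
  by rewrite take_window // -xX xt.
move=> /hasP [t]; rewrite mem_iota add1n ltnS => /andP [t1 tk].
rewrite take_window // -xX; case xt: (x t om) => [y|] //= yQ.
by exists t; split => //; exists y.
Qed.

Lemma maximal_word_path_window x0 X : maximal_word_path E x0 X ->
  maximal_path E w x0 (fun t om => X (window w om 0 t)).
Proof.
case=> X0 Xstep; split; first split => //; first split.
- move=> t om y; have := Xstep (window w om 0 t) (w t om).
  rewrite window_rcons add0n; case: (X (window w om 0 t)) => [z|->] //.
  by case: (X (rcons _ _)) => // y' yH [<-]; exists z.
- by move=> t o; apply: (@sigma_w_measurable_window _ _ _ w t (fun u => [set o] (X u))).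
- move=> om t y Xt; have := Xstep (window w om 0 t) (w t om).
  by rewrite window_rcons add0n Xt => + Xt1; rewrite Xt1.
Qed.

Hypothesis iid : iid_law P w mu.
Hypothesis no_dead_end : forall i s, 0 < mu s -> Hout E i s != finset.set0.

Lemma maximal_path_word_ae x0 x : maximal_path E w x0 x ->
  word_path_ae E mu x0 (path_word x).
Proof.
case=> xp xmax; split.
  have [|om _] := exists_window iid (p := [::]).
    by rewrite /word_prob big_nil ltr01.
  by rewrite -(path_wordE 0 om xp); case: xp.
move=> u c z pos Xu; have [om] := exists_window iid pos.
rewrite size_rcons window_rcons add0n => /rcons_inj [wu wc].
have xu : x (size u) om = Some z by rewrite (path_wordE _ om xp) wu.
have c_gt0 : 0 < mu c.
  rewrite lt_def (iid_mu_ge0 iid) andbT; apply: contraTneq pos => c0.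
  by rewrite word_prob_rcons c0 mulr0 ltxx.
case xS: (x (size u).+1 om) => [y|].
  have [z' [] ] := proj1 (proj2 xp) (size u) om y xS.
  rewrite xu wc => -[<-] yH; exists y => //.
  by rewrite -xS (path_wordE _ om xp) window_rcons add0n wu wc.
have := xmax om (size u) z xu xS; rewrite wc => /eqP.
by rewrite (negbTE (no_dead_end z c_gt0)).
Qed.

End WindowPaths.

Theorem proposition1 (R : realType) (d : measure_display) (Omega : measurableType d)
  (P : probability Omega R) (n h : nat) (E : 'I_h -> {set 'I_n * 'I_n})
  (mu : 'I_h -> R) (w : nat -> Omega -> 'I_h)
  (Hiid : iid_law P w mu)
  (Hnodead : forall (i : 'I_n) (s : 'I_h), 0 < mu s -> Hout E i s != finset.set0)
  (Q : {set 'I_n}) :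
  forall (k : nat) (x : 'I_n),
    weak_reach P E w Q k x = (vstar E Q mu k (emb x))%:E.
Proof.
move=> k x; have mu_ge0 := iid_mu_ge0 Hiid; have mu_sum1 := iid_mu_sum1 Hiid.
rewrite (vstar_emb Q mu_ge0 Hnodead); apply/le_anti/andP; split.
  apply: ge_ereal_sup => _ [y ymax <-].
  have yX t om := path_wordE t om (proj1 ymax).
  rewrite (reach_event_window Q k yX) (prob_window Hiid) lee_fin.
  apply: (word_expect_hits_le Q mu_ge0 mu_sum1).
  exact: maximal_path_word_ae Hiid Hnodead _ _ ymax.
apply: ereal_sup_ubound; exists (fun t om => greedy E Q mu k x (window w om 0 t)).
  exact/maximal_word_path_window/greedy_maximal.
rewrite (reach_event_window _ _ (fun _ _ => erefl)) (prob_window Hiid).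
by rewrite (greedy_value _ mu_ge0 mu_sum1 Hnodead).
Qed.
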